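(* Let a regular triangular grid in $\mathbb{R}^2$ with grid-size parameter $h$ be given, and consider the scalar steady conservation law $\partial_x f(u)+\partial_y g(u)=s(x,y)$ with smooth flux ${\bf f}=(f,g)$ and smooth source $s$. At an interior node $j$ define the U-MUSCL-SSQ residual $$Res_j=\frac{1}{V_j}\sum_{k\in\{k_j\}}\phi_{jk}A_{jk}-\tilde s_j,\qquad \tilde s_j=\frac1{V_j}\sum_{k\in\{k_j\}}\psi_{jk}V_{jk},$$ with $\phi_{jk}=\tfrac12[f_n(u_L)+f_n(u_R)]-\tfrac12\hat D_n(u_R-u_L)$, $f_n={\bf f}\cdot\hat{\bf n}_{jk}$, $\hat D_n=|\partial f_n/\partial u|$ evaluated at an intermediate state, $u_L=u_j+\tfrac{\kappa}{2}(u_k-u_j)+\tfrac{1-\kappa}{2}\overline\nabla u_j\cdot({\bf x}_k-{\bf x}_j)$, $u_R=u_k-\tfrac{\kappa}{2}(u_k-u_j)-\tfrac{1-\kappa}{2}\overline\nabla u_k\cdot({\bf x}_k-{\bf x}_j)$ with $\kappa=1/2$, $V_{jk}=\tfrac14({\bf x}_k-{\bf x}_j)\cdot{\bf n}_{jk}$, and $$\psi_{jk}=\kappa_s\frac{s_j+s_k}{2}+(1-\kappa_s)\Big[s_j+\tfrac12\overline\nabla s_j\cdot({\bf x}_k-{\bf x}_j)\Big],\qquad s_j=s({\bf x}_j).$$ If $\kappa_s=1/4$, then for every smooth exact solution $u$ (with $u_j=u({\bf x}_j)$), the truncation error satisfies $TE_j=Res_j=O(h^3)$; more precisely, $Res_j=\frac{1}{48V_j}[Q_{xx}+Q_{yy}+Q_{xy}]\,r_j+O(h^3)$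 with $r=\partial_xf+\partial_yg-s$, $Q_{xx}=\sum_k n_x\Delta x^3\,\partial_{xx}$, $Q_{yy}=\sum_k n_y\Delta y^3\,\partial_{yy}$, $Q_{xy}=\sum_k 3n_x\Delta x^2\Delta y\,\partial_{xy}$, where $\Delta x=x_k-x_j$, $\Delta y=y_k-y_j$, ${\bf n}_{jk}=(n_x,n_y)$.
   Context: Grid: a triangular grid is regular if every (interior) node has an identical compact stencil of edge-connected neighbors, the stencil is symmetric with respect to the central node (point symmetric), and it is translation invariant: for any edge-connected nodes $j,k$ the stencil of $j$ translated along the edge $jk$ coincides with the stencil of $k$ (examples: right-isosceles triangles from splitting squares, equilateral triangles; any linear image of a regular grid is regular). $h$ denotes the grid scale (the grid is $h$ times a fixed reference regular grid). Discretization: node-centered edge-based method on the median dual mesh; $\{k_j\}$ is the set of edge-connected neighbors of $j$, $V_j$ is the area of the median dual cell of $j$, ${\bf n}_{jk}$ is the directed-area vector of the dual face associated with edge $jk$ (sum of the two dual face segments from the edge midpoint to the centroids of the two adjacent triangles, oriented from $j$ to $k$), $A_{jk}=|{\bf n}_{jk}|$, $\hat{\bf n}_{jk}={\bf n}_{jk}/A_{jk}$. The gradients $\overline\nabla u_j$, $\overline\nabla s_j$ are nodal gradients computed by a linear least-squares fit over edge-connected neighbors. The truncation error $TE_j$ is $Res_j$ evaluated with the exact solution values at nodes. *)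

From Stdlib Require Import Reals Lra List.
Import ListNotations.
From Coquelicot Require Import Coquelicot.
Open Scope R_scope.

Definition smooth1 (f : R -> R) : Prop :=
  forall (n : nat) (x : R), ex_derive (Derive_n f n) x.

Definition px (F : R -> R -> R) : R -> R -> R :=
  fun x y => Derive (fun t => F t y) x.
Definition py (F : R -> R -> R) : R -> R -> R :=
  fun x y => Derive (fun t => F x t) y.

Fixpoint iterD (w : list bool) (F : R -> R -> R) : R -> R -> R :=
  match w with
  | nil => F
  | b :: w' => (if b then px else py) (iterD w' F)
  end.

Definition smooth2 (F : R -> R -> R) : Prop :=
  forall w : list bool,
    (forall x y, ex_derive (fun t => iterD w F t y) x /\
                 ex_derive (fun t => iterD w F x t) y) /\
    (forall z : R * R, continuous (fun z' : R * R => iterD w F (fst z') (snd z')) z).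

Definition vadd (a b : R * R) : R * R := (fst a + fst b, snd a + snd b).
Definition vsub (a b : R * R) : R * R := (fst a - fst b, snd a - snd b).
Definition vscal (c : R) (a : R * R) : R * R := (c * fst a, c * snd a).
Definition vopp (a : R * R) : R * R := (- fst a, - snd a).
Definition dot (a b : R * R) : R := fst a * fst b + snd a * snd b.
Definition det2 (a b : R * R) : R := fst a * snd b - snd a * fst b.
Definition vnorm (a : R * R) : R := sqrt (dot a a).
Definition rot (a : R * R) : R * R := (snd a, - fst a).

Definition ev (F : R -> R -> R) (x : R * R) : R := F (fst x) (snd x).

Definition sum6 (F : nat -> R) : R :=
  F 0%nat + F 1%nat + F 2%nat + F 3%nat + F 4%nat + F 5%nat.

(** * Regular triangular grid
    A regular triangular grid is the image of the reference lattice
    {m e1 + n e2} (e1, e2 linearly independent) scaled by h; every node has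
    the six edge-neighbours  x_j + h d_i, listed in cyclic (angular) order:
    e1, e2, e2-e1, -e1, -e2, e1-e2.  Consecutive neighbours d_i, d_(i+1)
    span the six triangles around the node. *)
Definition ref_offset (e1 e2 : R * R) (i : nat) : R * R :=
  match Nat.modulo i 6 with
  | 0%nat => e1
  | 1%nat => e2
  | 2%nat => vsub e2 e1
  | 3%nat => vopp e1
  | 4%nat => vopp e2
  | _ => vsub e1 e2
  end.

Section Scheme.
Variables (e1 e2 : R * R) (h : R).

(** edge vector x_k - x_j of the i-th edge (same at every node) *)
Definition dvec (i : nat) : R * R := vscal h (ref_offset e1 e2 i).

(** median dual cell area: one third of the area of each adjacent triangle *)
Definition Vcell : R :=
  sum6 (fun i => / 3 * (Rabs (det2 (dvec i) (dvec (S i))) / 2)).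

(** directed-area vector n_jk of the dual face of edge i (relative to node
    j): sum of the two dual-face segments centroid -> edge midpoint ->
    centroid, oriented from j to k.  Positions relative to x_j. *)
Definition nraw (i : nat) : R * R :=
  let m  := vscal (/ 2) (dvec i) in
  let c1 := vscal (/ 3) (vadd (dvec i) (dvec (i + 5))) in
  let c2 := vscal (/ 3) (vadd (dvec i) (dvec (S i))) in
  vadd (rot (vsub m c1)) (rot (vsub c2 m)).

Definition nvec (i : nat) : R * R :=
  if Rle_dec 0 (dot (nraw i) (dvec i)) then nraw i else vopp (nraw i).

Definition Aface (i : nat) : R := vnorm (nvec i).
Definition nhat (i : nat) : R * R := vscal (/ Aface i) (nvec i).

(** unweighted linear least-squares gradient of F at node x over its six
    edge-connected neighbours: the solution of the normal equations
    (sum d d^T) g = sum d (F(x+d) - F(x)). *)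
Definition lsq_grad (F : R * R -> R) (x : R * R) : R * R :=
  let a11 := sum6 (fun i => fst (dvec i) * fst (dvec i)) in
  let a12 := sum6 (fun i => fst (dvec i) * snd (dvec i)) in
  let a22 := sum6 (fun i => snd (dvec i) * snd (dvec i)) in
  let b1 := sum6 (fun i => fst (dvec i) * (F (vadd x (dvec i)) - F x)) in
  let b2 := sum6 (fun i => snd (dvec i) * (F (vadd x (dvec i)) - F x)) in
  let dt := a11 * a22 - a12 * a12 in
  ((a22 * b1 - a12 * b2) / dt, (a11 * b2 - a12 * b1) / dt).

Variables (f g : R -> R) (s u : R -> R -> R) (ustar : R * R -> R -> R -> R)
          (kappa kappas : R) (p : R * R).

Definition uLval (i : nat) : R :=
  let xk := vadd p (dvec i) in
  ev u p + kappa / 2 * (ev u xk - ev u p)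
    + (1 - kappa) / 2 * dot (lsq_grad (ev u) p) (dvec i).

Definition uRval (i : nat) : R :=
  let xk := vadd p (dvec i) in
  ev u xk - kappa / 2 * (ev u xk - ev u p)
    - (1 - kappa) / 2 * dot (lsq_grad (ev u) xk) (dvec i).

Definition fn (n : R * R) (w : R) : R := f w * fst n + g w * snd n.
Definition an (n : R * R) (w : R) : R := Derive f w * fst n + Derive g w * snd n.

Definition phi (i : nat) : R :=
  let uL := uLval i in
  let uR := uRval i in
  let Dn := Rabs (an (nhat i) (ustar (nhat i) uL uR)) in
  / 2 * (fn (nhat i) uL + fn (nhat i) uR) - / 2 * Dn * (uR - uL).

Definition Vjk (i : nat) : R := / 4 * dot (dvec i) (nvec i).

Definition psi (i : nat) : R :=
  let sj := ev s p in
  let sk := ev s (vadd p (dvec i)) in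
  kappas * ((sj + sk) / 2)
    + (1 - kappas) * (sj + / 2 * dot (lsq_grad (ev s) p) (dvec i)).

Definition stilde : R := / Vcell * sum6 (fun i => psi i * Vjk i).

Definition Res : R := / Vcell * sum6 (fun i => phi i * Aface i) - stilde.

Definition rfun : R -> R -> R :=
  fun x y => px (fun a b => f (u a b)) x y + py (fun a b => g (u a b)) x y - s x y.

Definition Qterm : R :=
  sum6 (fun i =>
    let dx := fst (dvec i) in let dy := snd (dvec i) in
    let nx := fst (nvec i) in let ny := snd (nvec i) in
    nx * dx ^ 3 * ev (px (px rfun)) p
    + ny * dy ^ 3 * ev (py (py rfun)) p
    + 3 * nx * dx ^ 2 * dy * ev (px (py rfun)) p).

End Scheme.

(** Every ingredient of the residual is expanded in the grid scale [h] as a cubic polynomial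
    (a jet) plus [O(h^4)]: nodal values by two-dimensional Taylor expansion, the least-squares
    gradients (exact on linear data; at the node itself point symmetry also removes the
    quadratic error), and the fluxes of the reconstructed states by one-dimensional Taylor
    expansion. Since [V_j ~ h^2] and [A_jk ~ h], the residual becomes a jet in [h] whose
    coefficients of [1], [h] and [h^2] are polynomial identities in the lattice vectors; for
    [kappa = 1/2] and [kappa_s = 1/4] they say exactly that [Res_j] equals
    [r_j + Q / (48 V_j)] up to [O(h^3)]. The upwind dissipation does not spoil this: on each
    edge [u_R - u_L = O(h^3)] and the wave speed at the intermediate state is [|a_n(u_j)| + O(h)],
    while the leading [h^3] terms of opposite edges cancel. For an exact solution [r] and its
    derivatives vanish. *)

From Stdlib Require Import Reals Lra Lia List.
From Coquelicot Require Import Coquelicot.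
Open Scope R_scope.

(** * Asymptotics as [h -> 0+] *)

Definition Oh (n : nat) (E : R -> R) : Prop :=
  exists C h0, 0 <= C /\ 0 < h0 /\ forall h, 0 < h < h0 -> Rabs (E h) <= C * h ^ n.

Lemma Oh_ext n E E' : (forall h, 0 < h -> E h = E' h) -> Oh n E -> Oh n E'.
Proof.
  intros HE [C [h0 [HC [Hh0 H]]]]. exists C, h0; repeat split; auto.
  intros h Hh. rewrite <- HE by lra. auto.
Qed.

Lemma Oh_dominated n E G K : Oh n G -> 0 <= K ->
  (exists h1, 0 < h1 /\ forall h, 0 < h < h1 -> Rabs (E h) <= K * Rabs (G h)) ->
  Oh n E.
Proof.
  intros [C [h0 [HC [Hh0 H]]]] HK [h1 [Hh1 H1]].
  exists (K * C), (Rmin h0 h1); repeat split.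
  - now apply Rmult_le_pos.
  - now apply Rmin_glb_lt.
  - intros h [Hh Hhm]. destruct (Rmin_Rgt_l h0 h1 h Hhm).
    eapply Rle_trans; [apply H1; lra|]. rewrite Rmult_assoc.
    apply Rmult_le_compat_l; [exact HK|apply H; lra].
Qed.

Lemma Oh_add n E F : Oh n E -> Oh n F -> Oh n (fun h => E h + F h).
Proof.
  intros [C1 [h1 [HC1 [Hh1 H1]]]] [C2 [h2 [HC2 [Hh2 H2]]]].
  exists (C1 + C2), (Rmin h1 h2); repeat split; try lra.
  - now apply Rmin_glb_lt.
  - intros h [Hh Hhm]. destruct (Rmin_Rgt_l h1 h2 h Hhm).
    eapply Rle_trans; [apply Rabs_triang|].
    specialize (H1 h (conj Hh H)). specialize (H2 h (conj Hh H0)). lra.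
Qed.

Lemma Oh_scal n c E : Oh n E -> Oh n (fun h => c * E h).
Proof.
  intros [C [h0 [HC [Hh0 H]]]]. exists (Rabs c * C), h0; repeat split; auto.
  - apply Rmult_le_pos; auto; apply Rabs_pos.
  - intros h Hh. rewrite Rabs_mult, Rmult_assoc. apply Rmult_le_compat_l; auto. apply Rabs_pos.
Qed.

Lemma Oh_sub n E F : Oh n E -> Oh n F -> Oh n (fun h => E h - F h).
Proof.
  intros HE HF. apply (Oh_ext _ (fun h => E h + -1 * F h)); [intros; ring|].
  now apply Oh_add, Oh_scal.
Qed.

Lemma Oh_abs n E : Oh n E -> Oh n (fun h => Rabs (E h)).
Proof.
  intros [C [h0 [HC [Hh0 H]]]]. exists C, h0; repeat split; auto.
  intros. rewrite Rabs_Rabsolu. auto.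
Qed.

Lemma Oh_sum6 n E : (forall i, Oh n (E i)) -> Oh n (fun h => sum6 (fun i => E i h)).
Proof. intros H. unfold sum6. repeat apply Oh_add; auto. Qed.

Lemma Oh_mult n m E F : Oh n E -> Oh m F -> Oh (n + m) (fun h => E h * F h).
Proof.
  intros [C1 [h1 [HC1 [Hh1 H1]]]] [C2 [h2 [HC2 [Hh2 H2]]]].
  exists (C1 * C2), (Rmin h1 h2); repeat split.
  - now apply Rmult_le_pos.
  - now apply Rmin_glb_lt.
  - intros h [Hh Hhm]. destruct (Rmin_Rgt_l h1 h2 h Hhm).
    specialize (H1 h (conj Hh H)). specialize (H2 h (conj Hh H0)).
    rewrite Rabs_mult, pow_add.
    replace (C1 * C2 * (h ^ n * h ^ m)) with ((C1 * h ^ n) * (C2 * h ^ m)) by ring.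
    apply Rmult_le_compat; auto; apply Rabs_pos.
Qed.

Lemma Oh_mult_bounded n E F : Oh n E -> Oh 0 F -> Oh n (fun h => E h * F h).
Proof. intros. replace n with (n + 0)%nat by lia. now apply Oh_mult. Qed.

Lemma Oh_weaken n m E : (m <= n)%nat -> Oh n E -> Oh m E.
Proof.
  intros Hmn [C [h0 [HC [Hh0 H]]]]. exists C, (Rmin h0 1); repeat split; auto.
  - apply Rmin_glb_lt; lra.
  - intros h [Hh Hhm]. destruct (Rmin_Rgt_l h0 1 h Hhm).
    eapply Rle_trans; [apply H; lra|]. apply Rmult_le_compat_l; auto.
    replace n with (m + (n - m))%nat by lia. rewrite pow_add.
    rewrite <- (Rmult_1_r (h ^ m)) at 2. apply Rmult_le_compat_l.
    + apply pow_le; lra.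
    + rewrite <- (pow1 (n - m)). apply pow_incr; lra.
Qed.

Lemma Oh_monomial n k c : (n <= k)%nat -> Oh n (fun h => c * h ^ k).
Proof.
  intros Hnk. apply Oh_scal, (Oh_weaken k); auto.
  exists 1, 1; repeat split; try lra. intros h Hh.
  rewrite Rabs_right; [lra|]. apply Rle_ge, pow_le; lra.
Qed.

Lemma Oh_div_h n E : Oh (S n) E -> Oh n (fun h => E h / h).
Proof.
  intros [C [h0 [HC [Hh0 H]]]]. exists C, h0; repeat split; auto.
  intros h Hh. unfold Rdiv. rewrite Rabs_mult, Rabs_inv, (Rabs_right h) by lra.
  apply (Rmult_le_reg_r h); [lra|]. rewrite Rmult_assoc, Rinv_l by lra.
  rewrite Rmult_1_r. specialize (H h Hh). simpl in H. lra.
Qed.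

Lemma Oh1_eventually_le1 E : Oh 1 E ->
  exists h0, 0 < h0 /\ forall h, 0 < h < h0 -> Rabs (E h) <= 1.
Proof.
  intros [C [h0 [HC [Hh0 H]]]]. exists (Rmin h0 (/ (C + 1))). split.
  - apply Rmin_glb_lt; auto. apply Rinv_0_lt_compat; lra.
  - intros h [Hh Hhm]. destruct (Rmin_Rgt_l _ _ h Hhm) as [H1 H2].
    eapply Rle_trans; [apply H; lra|]. simpl. rewrite Rmult_1_r.
    apply Rle_trans with ((C + 1) * h); [nra|].
    apply (Rmult_lt_compat_l (C + 1)) in H2; [|lra]. rewrite Rinv_r in H2; lra.
Qed.

(** * Cubic jets in [h] *)

Record jet := mkJ { j0 : R; j1 : R; j2 : R; j3 : R }.

Definition jev (J : jet) (h : R) : R := j0 J + j1 J * h + j2 J * h ^ 2 + j3 J * h ^ 3.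

Definition approx (n : nat) (F : R -> R) (J : jet) : Prop := Oh n (fun h => F h - jev J h).

Definition jconst (c : R) := mkJ c 0 0 0.
Definition jadd (J K : jet) := mkJ (j0 J + j0 K) (j1 J + j1 K) (j2 J + j2 K) (j3 J + j3 K).
Definition jsub (J K : jet) := mkJ (j0 J - j0 K) (j1 J - j1 K) (j2 J - j2 K) (j3 J - j3 K).
Definition jscal (c : R) (J : jet) := mkJ (c * j0 J) (c * j1 J) (c * j2 J) (c * j3 J).
Definition jmul (J K : jet) :=
  mkJ (j0 J * j0 K) (j0 J * j1 K + j1 J * j0 K)
      (j0 J * j2 K + j1 J * j1 K + j2 J * j0 K)
      (j0 J * j3 K + j1 J * j2 K + j2 J * j1 K + j3 J * j0 K).
Definition jsum6 (J : nat -> jet) :=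
  mkJ (sum6 (fun i => j0 (J i))) (sum6 (fun i => j1 (J i)))
      (sum6 (fun i => j2 (J i))) (sum6 (fun i => j3 (J i))).
Definition jshift (J : jet) := mkJ (j1 J) (j2 J) (j3 J) 0.

Lemma jet_eq J K : j0 J = j0 K -> j1 J = j1 K -> j2 J = j2 K -> j3 J = j3 K -> J = K.
Proof. destruct J, K; simpl; intros; subst; reflexivity. Qed.

Lemma approx_ext n F F' J J' : (forall h, 0 < h -> F h = F' h) -> J = J' ->
  approx n F J -> approx n F' J'.
Proof.
  intros HF <-. apply Oh_ext. intros h Hh. now rewrite HF.
Qed.

Lemma approx_const n c : approx n (fun _ => c) (jconst c).
Proof.
  apply (Oh_ext _ (fun h => 0 * h ^ n)); [intros; unfold jev; simpl; ring|].
  now apply Oh_monomial.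
Qed.

Lemma approx_add n F G J K : approx n F J -> approx n G K ->
  approx n (fun h => F h + G h) (jadd J K).
Proof.
  intros HF HG. eapply Oh_ext; [|exact (Oh_add _ _ _ HF HG)].
  intros; unfold jev, jadd; simpl; ring.
Qed.

Lemma approx_sub n F G J K : approx n F J -> approx n G K ->
  approx n (fun h => F h - G h) (jsub J K).
Proof.
  intros HF HG. eapply Oh_ext; [|exact (Oh_sub _ _ _ HF HG)].
  intros; unfold jev, jsub; simpl; ring.
Qed.

Lemma approx_scal n c F J : approx n F J -> approx n (fun h => c * F h) (jscal c J).
Proof.
  intros HF. eapply Oh_ext; [|exact (Oh_scal _ c _ HF)].
  intros; unfold jev, jscal; simpl; ring.
Qed.

Lemma approx_sum6 n F J : (forall i, approx n (F i) (J i)) ->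
  approx n (fun h => sum6 (fun i => F i h)) (jsum6 J).
Proof.
  intros H. eapply Oh_ext; [|exact (Oh_sum6 n (fun i h => F i h - jev (J i) h) H)].
  intros; unfold jev, jsum6, sum6; simpl; ring.
Qed.

Lemma approx_weaken n m F J : (m <= n)%nat -> approx n F J -> approx m F J.
Proof. apply Oh_weaken. Qed.

Lemma approx_monomial2 n q : approx n (fun h => h ^ 2 * q) (mkJ 0 0 q 0).
Proof.
  apply (Oh_ext _ (fun h => 0 * h ^ n)); [intros; unfold jev; simpl; ring|].
  now apply Oh_monomial.
Qed.

Lemma Oh_jev_sub_j0 J : Oh 1 (fun h => jev J h - j0 J).
Proof.
  assert (H1 : Oh 1 (fun h => j1 J * h ^ 1)) by (apply Oh_monomial; lia).
  assert (H2 : Oh 1 (fun h => j2 J * h ^ 2)) by (apply Oh_monomial; lia).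
  assert (H3 : Oh 1 (fun h => j3 J * h ^ 3)) by (apply Oh_monomial; lia).
  eapply Oh_ext; [|exact (Oh_add _ _ _ (Oh_add _ _ _ H1 H2) H3)].
  intros h _. unfold jev. ring.
Qed.

Lemma Oh_jev J : Oh 0 (jev J).
Proof.
  eapply Oh_ext; [|exact (Oh_add _ _ _ (Oh_weaken 1 0 _ (Nat.le_0_l 1) (Oh_jev_sub_j0 J))
                                  (Oh_monomial 0 0 (j0 J) (le_n 0)))].
  intros; simpl; ring.
Qed.

Lemma approx_bounded n F J : approx n F J -> Oh 0 F.
Proof.
  intros H. apply (Oh_weaken n 0) in H; [|lia].
  eapply Oh_ext; [|exact (Oh_add _ _ _ H (Oh_jev J))]. intros; simpl; ring.
Qed.

Lemma approx_O1 n F J : (1 <= n)%nat -> j0 J = 0 -> approx n F J -> Oh 1 F.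
Proof.
  intros Hn H0 H. apply (Oh_weaken n 1) in H; auto.
  eapply Oh_ext; [|exact (Oh_add _ _ _ H (Oh_jev_sub_j0 J))].
  intros; rewrite H0; ring.
Qed.

Lemma approx_mul n F G J K : (n <= 4)%nat -> approx n F J -> approx n G K ->
  approx n (fun h => F h * G h) (jmul J K).
Proof.
  intros Hn HF HG.
  assert (T1 : Oh n (fun h => (F h - jev J h) * G h))
    by exact (Oh_mult_bounded _ _ _ HF (approx_bounded _ _ _ HG)).
  assert (T2 : Oh n (fun h => (G h - jev K h) * jev J h))
    by exact (Oh_mult_bounded _ _ _ HG (Oh_jev J)).
  assert (T3 : Oh n (fun h => (j1 J * j3 K + j2 J * j2 K + j3 J * j1 K) * h ^ 4
       + (j2 J * j3 K + j3 J * j2 K) * h ^ 5 + (j3 J * j3 K) * h ^ 6))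
    by (repeat apply Oh_add; apply Oh_monomial; lia).
  eapply Oh_ext; [|exact (Oh_add _ _ _ (Oh_add _ _ _ T1 T2) T3)].
  intros; unfold jev, jmul; simpl; ring.
Qed.

Lemma approx_div_h n F J : j0 J = 0 -> approx (S n) F J ->
  approx n (fun h => F h / h) (jshift J).
Proof.
  intros H0 H. eapply Oh_ext; [|exact (Oh_div_h _ _ H)].
  intros h Hh. unfold jev, jshift; simpl. rewrite H0. field. lra.
Qed.

Lemma approx_Oh3 F J : j0 J = 0 -> j1 J = 0 -> j2 J = 0 -> approx 3 F J -> Oh 3 F.
Proof.
  intros H0 H1 H2 H.
  eapply Oh_ext; [|exact (Oh_add _ _ _ H (Oh_monomial 3 3 (j3 J) (le_n 3)))].
  intros; unfold jev; rewrite H0, H1, H2; ring.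
Qed.

(** * Taylor expansions *)

Lemma iterD_app w w' F : iterD w (iterD w' F) = iterD (w ++ w') F.
Proof. induction w as [|b w IH]; simpl; auto. now rewrite IH. Qed.

Lemma smooth2_iterD F w : smooth2 F -> smooth2 (iterD w F).
Proof. intros H w'. rewrite iterD_app. apply H. Qed.

Lemma smooth2_continuity_2d F w x y : smooth2 F -> continuity_2d_pt (iterD w F) x y.
Proof. intros H. apply continuity_2d_pt_filterlim, (proj2 (H w) (x, y)). Qed.

Lemma smooth2_ex_diff_n F n w x y : smooth2 F -> ex_diff_n (iterD w F) n x y.
Proof.
  intros H. revert w x y. induction n as [|n IH]; intros w x y; simpl.
  - split; auto. now apply smooth2_continuity_2d.
  - destruct (proj1 (H w) x y) as [Hx Hy].
    repeat split; auto;
      [now apply smooth2_continuity_2d|apply (IH (true :: w))|apply (IH (false :: w))].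
Qed.

Lemma smooth2_schwarz F x y : smooth2 F -> px (py F) x y = py (px F) x y.
Proof.
  intros HF. apply Schwarz.
  - exists (mkposreal 1 Rlt_0_1). intros u v _ _.
    destruct (proj1 (HF nil) u v), (proj1 (HF (false :: nil)) u v), (proj1 (HF (true :: nil)) u v).
    repeat split; assumption.
  - exact (smooth2_continuity_2d F (true :: false :: nil) x y HF).
  - exact (smooth2_continuity_2d F (false :: true :: nil) x y HF).
Qed.

Definition pd (F : R -> R -> R) m k x y := partial_derive m k F x y.
Arguments pd : simpl never.

(** Taylor jet of [h |-> F (x + h v1) (y + h v2)] *)
Definition tjet (F : R -> R -> R) x y v1 v2 : jet :=
  mkJ (F x y) (pd F 1 0 x y * v1 + pd F 0 1 x y * v2)
    (/ 2 * (pd F 2 0 x y * v1 ^ 2 + 2 * pd F 1 1 x y * v1 * v2 + pd F 0 2 x y * v2 ^ 2))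
    (/ 6 * (pd F 3 0 x y * v1 ^ 3 + 3 * pd F 2 1 x y * v1 ^ 2 * v2
            + 3 * pd F 1 2 x y * v1 * v2 ^ 2 + pd F 0 3 x y * v2 ^ 3)).

Lemma DL_pol3_jev F x y v1 v2 h :
  DL_pol 3 F x y (h * v1) (h * v2) = jev (tjet F x y v1 v2) h.
Proof.
  unfold DL_pol, differential, jev, tjet, pd, Binomial.C. simpl.
  change (partial_derive 0 0 F x y) with (F x y). field.
Qed.

Lemma approx_taylor2 F x y v1 v2 : smooth2 F ->
  approx 4 (fun h => F (x + h * v1) (y + h * v2)) (tjet F x y v1 v2).
Proof.
  intros HF.
  assert (Hl : locally_2d (fun u v => ex_diff_n F 4 u v) x y).
  { exists (mkposreal 1 Rlt_0_1). intros. apply (smooth2_ex_diff_n F 4 nil), HF. }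
  destruct (Taylor_Lagrange_2d F 3 x y Hl) as [D [delta Hd]].
  set (M := Rabs v1 + Rabs v2 + 1).
  assert (HM : 0 < M) by (unfold M; pose proof (Rabs_pos v1); pose proof (Rabs_pos v2); lra).
  exists (Rabs D * M ^ 4), (delta / M). repeat split.
  - apply Rmult_le_pos; [apply Rabs_pos|apply pow_le; lra].
  - apply Rdiv_lt_0_compat; [apply cond_pos|lra].
  - intros h [Hh0 Hh1].
    assert (HhM : h * M < delta).
    { apply (Rmult_lt_compat_r M) in Hh1; auto. unfold Rdiv in Hh1.
      rewrite Rmult_assoc, Rinv_l, Rmult_1_r in Hh1; lra. }
    assert (Hmax : Rmax (Rabs (h * v1)) (Rabs (h * v2)) <= h * M).
    { rewrite !Rabs_mult, Rabs_right by lra.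
      apply Rmax_lub; apply Rmult_le_compat_l; unfold M;
        pose proof (Rabs_pos v1); pose proof (Rabs_pos v2); lra. }
    assert (Hm0 : 0 <= Rmax (Rabs (h * v1)) (Rabs (h * v2)))
      by (eapply Rle_trans; [apply Rabs_pos|apply Rmax_l]).
    specialize (Hd (x + h * v1) (y + h * v2)).
    replace (x + h * v1 - x) with (h * v1) in Hd by ring.
    replace (y + h * v2 - y) with (h * v2) in Hd by ring.
    rewrite DL_pol3_jev in Hd.
    pose proof (Rmax_l (Rabs (h * v1)) (Rabs (h * v2))).
    pose proof (Rmax_r (Rabs (h * v1)) (Rabs (h * v2))).
    eapply Rle_trans; [apply Hd; lra|].
    eapply Rle_trans; [apply Rmult_le_compat_r; [apply pow_le; auto|apply Rle_abs]|].
    replace (Rabs D * M ^ 4 * h ^ 4) with (Rabs D * (h * M) ^ 4) by ring.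
    apply Rmult_le_compat_l; [apply Rabs_pos|]. apply pow_incr. lra.
Qed.

Lemma smooth1_ex_derive_n f k t : smooth1 f -> ex_derive_n f k t.
Proof. intros H. destruct k; simpl; auto. Qed.

Lemma smooth1_continuity f k t : smooth1 f -> continuity_pt (Derive_n f k) t.
Proof.
  intros H. apply continuity_pt_filterlim, (ex_derive_continuous (Derive_n f k)), H.
Qed.

Lemma smooth1_bounded_near f k c : smooth1 f ->
  exists M, 0 <= M /\ forall t, Rabs (t - c) <= 1 -> Rabs (Derive_n f k t) <= M.
Proof.
  intros H.
  destruct (continuity_ab_maj (fun t => Rabs (Derive_n f k t)) (c - 1) (c + 1)) as [Mx [HM HMx]].
  - lra.
  - intros t _. apply (continuity_pt_comp (Derive_n f k) Rabs).
    + now apply smooth1_continuity.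
    + apply Rcontinuity_abs.
  - exists (Rabs (Derive_n f k Mx)). split; [apply Rabs_pos|].
    intros t Ht. apply HM. apply Rabs_le_between in Ht. lra.
Qed.

Definition taylor3 f c w :=
  f c + Derive_n f 1 c * (w - c) + Derive_n f 2 c / 2 * (w - c) ^ 2
    + Derive_n f 3 c / 6 * (w - c) ^ 3.

Lemma taylor3_lagrange_right f c w : (forall k t, ex_derive_n f k t) -> c < w ->
  exists z, c < z < w /\ f w - taylor3 f c w = (w - c) ^ 4 / 24 * Derive_n f 4 z.
Proof.
  intros Hf Hcw. destruct (Taylor_Lagrange f 3 c w Hcw) as [z [Hz ->]]; [intros; apply Hf|].
  exists z. split; auto. unfold taylor3. simpl. field.
Qed.

Lemma taylor3_lagrange f c w : smooth1 f ->
  exists z, Rabs (z - c) <= Rabs (w - c) /\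
    f w - taylor3 f c w = (w - c) ^ 4 / 24 * Derive_n f 4 z.
Proof.
  intros Hf. assert (Hn := fun k t => smooth1_ex_derive_n f k t Hf).
  destruct (Rtotal_order c w) as [Hlt|[<-|Hgt]].
  - destruct (taylor3_lagrange_right f c w Hn Hlt) as [z [Hz E]].
    exists z. split; [rewrite !Rabs_right; lra|exact E].
  - exists c. split; [lra|]. unfold taylor3. field.
  - (* reflect: apply the right-sided expansion to [t |-> f (- t)] *)
    set (fo := fun t => f (- t)).
    assert (Hloc : forall t n, locally (- t)
              (fun y : R_UniformSpace => forall k, (k <= n)%nat -> ex_derive_n f k y))
      by (intros; exists (mkposreal 1 Rlt_0_1); auto).
    assert (Hdo : forall k t, Derive_n fo k t = (-1) ^ k * Derive_n f k (- t))
      by (intros; apply Derive_n_comp_opp, Hloc).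
    destruct (taylor3_lagrange_right fo (- c) (- w)) as [z [Hz E]];
      [intros; apply ex_derive_n_comp_opp, Hloc|lra|].
    exists (- z). split; [rewrite !Rabs_left; lra|].
    assert (Eo : f w - taylor3 f c w = fo (- w) - taylor3 fo (- c) (- w)).
    { unfold taylor3. rewrite !Hdo. unfold fo. rewrite !Ropp_involutive. simpl. field. }
    rewrite Eo, E, Hdo. simpl. field.
Qed.

Lemma taylor3_remainder f c : smooth1 f -> exists K, 0 <= K /\
  forall w, Rabs (w - c) <= 1 -> Rabs (f w - taylor3 f c w) <= K * Rabs (w - c) ^ 4.
Proof.
  intros Hf. destruct (smooth1_bounded_near f 4 c Hf) as [M [HM0 HM]].
  exists (M / 24). split; [lra|]. intros w Hw.
  destruct (taylor3_lagrange f c w Hf) as [z [Hz ->]].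
  rewrite Rabs_mult. unfold Rdiv. rewrite Rabs_mult, <- RPow_abs, (Rabs_right (/ 24)) by lra.
  assert (0 <= Rabs (w - c) ^ 4) by (apply pow_le, Rabs_pos).
  assert (Rabs (Derive_n f 4 z) <= M) by (apply HM; lra).
  pose proof (Rabs_pos (Derive_n f 4 z)). nra.
Qed.

Lemma Derive_lipschitz_near f c : smooth1 f -> exists L, 0 <= L /\
  forall w, Rabs (w - c) <= 1 -> Rabs (Derive f w - Derive f c) <= L * Rabs (w - c).
Proof.
  intros H. destruct (smooth1_bounded_near f 2 c H) as [M [HM0 HM]].
  exists M. split; auto. intros w Hw.
  destruct (MVT_gen (Derive_n f 1) c w (Derive_n f 2)) as [z [Hz Heq]].
  - intros; apply Derive_correct, H.
  - intros; now apply smooth1_continuity.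
  - change (Derive f w - Derive f c) with (Derive_n f 1 w - Derive_n f 1 c).
    rewrite Heq, Rabs_mult. apply Rmult_le_compat_r; [apply Rabs_pos|].
    apply HM. apply Rabs_le_between in Hw. apply Rabs_le_between.
    revert Hz. unfold Rmin, Rmax. destruct Rle_dec; lra.
Qed.

Lemma between_dist w l r z : Rmin l r <= w <= Rmax l r ->
  Rabs (w - z) <= Rabs (l - z) + Rabs (r - z).
Proof.
  unfold Rmin, Rmax. intros Hw. destruct (Rle_dec l r); unfold Rabs; repeat destruct Rcase_abs; lra.
Qed.

Definition jcomp (f : R -> R) (J : jet) : jet :=
  let c := j0 J in let d := mkJ 0 (j1 J) (j2 J) (j3 J) in
  jadd (jconst (f c)) (jadd (jscal (Derive_n f 1 c) d)
    (jadd (jscal (Derive_n f 2 c / 2) (jmul d d))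
          (jscal (Derive_n f 3 c / 6) (jmul d (jmul d d))))).

Lemma approx_comp f W J : smooth1 f -> approx 4 W J ->
  approx 4 (fun h => f (W h)) (jcomp f J).
Proof.
  intros Hf HW. set (c := j0 J). set (d := mkJ 0 (j1 J) (j2 J) (j3 J)).
  assert (Hd : approx 4 (fun h => W h - c) d).
  { eapply approx_ext; [| |exact (approx_sub _ _ _ _ _ HW (approx_const 4 c))]; [reflexivity|].
    apply jet_eq; simpl; [unfold c|..]; ring. }
  assert (Hd1 : Oh 1 (fun h => W h - c)) by (apply (approx_O1 4 _ d); auto; lia).
  destruct (taylor3_remainder f c Hf) as [K [HK HT]].
  destruct (Oh1_eventually_le1 _ Hd1) as [h1 [Hh1 Hb]].
  assert (HR : Oh 4 (fun h => f (W h) - taylor3 f c (W h))).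
  { assert (Hd4 : Oh 4 (fun h => (W h - c) * ((W h - c) * ((W h - c) * (W h - c)))))
      by (change 4%nat with (1 + (1 + (1 + 1)))%nat; repeat apply Oh_mult; auto).
    apply (Oh_dominated 4 _ _ K Hd4 HK). exists h1. split; auto. intros h Hh.
    eapply Rle_trans; [apply HT, Hb, Hh|]. right. rewrite !Rabs_mult. simpl. ring. }
  assert (H2 := approx_mul 4 _ _ _ _ (le_n 4) Hd Hd).
  assert (H3 := approx_mul 4 _ _ _ _ (le_n 4) Hd H2).
  assert (HP := approx_add _ _ _ _ _ (approx_const 4 (f c)) (approx_add _ _ _ _ _
    (approx_scal _ (Derive_n f 1 c) _ _ Hd) (approx_add _ _ _ _ _
    (approx_scal _ (Derive_n f 2 c / 2) _ _ H2) (approx_scal _ (Derive_n f 3 c / 6) _ _ H3)))).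
  eapply Oh_ext; [|exact (Oh_add _ _ _ HR HP)].
  intros h _. unfold taylor3, jcomp. fold c d. simpl. ring.
Qed.

(** * Derivatives of [r = (f o u)_x + (g o u)_y - s] *)

Section RDerivatives.
Variables (f g : R -> R) (s u : R -> R -> R).
Hypotheses (Hf : smooth1 f) (Hg : smooth1 g) (Hs : smooth2 s) (Hu : smooth2 u).

Lemma smooth2_ex_derive_x F w x y : smooth2 F -> ex_derive (fun t => iterD w F t y) x.
Proof. intros HF. apply (proj1 (HF w) x y). Qed.
Lemma smooth2_ex_derive_y F w x y : smooth2 F -> ex_derive (fun t => iterD w F x t) y.
Proof. intros HF. apply (proj2 (proj1 (HF w) x y)). Qed.

Ltac word_of G := match G with
  | px ?H => let w := word_of H in constr:(true :: w)
  | py ?H => let w := word_of H in constr:(false :: w)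
  | _ => constr:(@nil bool) end.
Ltac base_of G := match G with px ?H => base_of H | py ?H => base_of H | _ => G end.
Ltac smooth_of B := match B with u => exact Hu | s => exact Hs end.
Ltac ex_derive_one := match goal with
  | |- True => exact I
  | |- ex_derive (fun _ => Derive (fun _ => Derive (fun _ => ?F _) _) _) _ =>
      first [exact (Hf 2%nat _) | exact (Hg 2%nat _)]
  | |- ex_derive (fun _ => Derive (fun _ => ?F _) _) _ =>
      first [exact (Hf 1%nat _) | exact (Hg 1%nat _)]
  | |- ex_derive (fun _ => ?F _) _ =>
      first [exact (Hf 0%nat _) | exact (Hg 0%nat _)]
  | |- ex_derive (fun x0 => ?G x0 ?y) ?x =>
      let B := base_of G in let w := word_of G in
      exact (smooth2_ex_derive_x B w x y ltac:(smooth_of B))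
  | |- ex_derive (fun x0 => ?G ?x x0) ?y =>
      let B := base_of G in let w := word_of G in
      exact (smooth2_ex_derive_y B w x y ltac:(smooth_of B))
  end.
Ltac ex_derive_all := repeat split; ex_derive_one.

Definition Dfu k x y := Derive_n f k (u x y).
Definition Dgu k x y := Derive_n g k (u x y).

Definition ux := px u.
Definition uy := py u.

Definition r_expr x y :=
  Derive_n f 1 (u x y) * ux x y + Derive_n g 1 (u x y) * uy x y - s x y.
Definition rx_expr x y :=
  Derive_n f 2 (u x y) * ux x y ^ 2 + Derive_n f 1 (u x y) * px ux x y
  + Derive_n g 2 (u x y) * ux x y * uy x y + Derive_n g 1 (u x y) * px uy x y - px s x y.
Definition ry_expr x y :=
  Derive_n f 2 (u x y) * uy x y * ux x y + Derive_n f 1 (u x y) * px uy x y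
  + Derive_n g 2 (u x y) * uy x y ^ 2 + Derive_n g 1 (u x y) * py uy x y - py s x y.

Lemma rfun_eq x y : rfun f g s u x y = r_expr x y.
Proof.
  unfold rfun, r_expr. f_equal. f_equal.
  - unfold px. apply is_derive_unique. auto_derive; [ex_derive_all|].
    unfold ux; cbv [px Derive_n]. ring.
  - unfold py. apply is_derive_unique. auto_derive; [ex_derive_all|].
    unfold uy; cbv [py Derive_n]. ring.
Qed.

Lemma rfun_pd x y : rfun f g s u x y = Dfu 1 x y * pd u 1 0 x y + Dgu 1 x y * pd u 0 1 x y - s x y.
Proof. rewrite rfun_eq. reflexivity. Qed.

Lemma px_rfun x y : px (rfun f g s u) x y = rx_expr x y.
Proof.
  unfold px at 1. rewrite (Derive_ext _ (fun t => r_expr t y)) by (intros; apply rfun_eq).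
  apply is_derive_unique. unfold r_expr, ux, uy. auto_derive; [ex_derive_all|].
  unfold rx_expr, ux, uy; cbv [px py Derive_n]. ring.
Qed.

Lemma py_rfun x y : py (rfun f g s u) x y = ry_expr x y.
Proof.
  unfold py at 1. rewrite (Derive_ext _ (fun t => r_expr x t)) by (intros; apply rfun_eq).
  apply is_derive_unique. unfold r_expr, ux, uy. auto_derive; [ex_derive_all|].
  unfold ry_expr, ux, uy. rewrite (smooth2_schwarz u x y Hu). cbv [px py Derive_n]. ring.
Qed.

Definition rxx_expr x y :=
  Dfu 3 x y * pd u 1 0 x y ^ 3 + 3 * Dfu 2 x y * pd u 1 0 x y * pd u 2 0 x y
  + Dfu 1 x y * pd u 3 0 x y + Dgu 3 x y * pd u 1 0 x y ^ 2 * pd u 0 1 x y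
  + Dgu 2 x y * (pd u 2 0 x y * pd u 0 1 x y + 2 * pd u 1 0 x y * pd u 1 1 x y)
  + Dgu 1 x y * pd u 2 1 x y - pd s 2 0 x y.
Definition ryy_expr x y :=
  Dfu 3 x y * pd u 0 1 x y ^ 2 * pd u 1 0 x y
  + Dfu 2 x y * (pd u 0 2 x y * pd u 1 0 x y + 2 * pd u 0 1 x y * pd u 1 1 x y)
  + Dfu 1 x y * pd u 1 2 x y + Dgu 3 x y * pd u 0 1 x y ^ 3
  + 3 * Dgu 2 x y * pd u 0 1 x y * pd u 0 2 x y + Dgu 1 x y * pd u 0 3 x y - pd s 0 2 x y.
Definition rxy_expr x y :=
  Dfu 3 x y * pd u 1 0 x y ^ 2 * pd u 0 1 x y
  + Dfu 2 x y * (2 * pd u 1 1 x y * pd u 1 0 x y + pd u 0 1 x y * pd u 2 0 x y)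
  + Dfu 1 x y * pd u 2 1 x y + Dgu 3 x y * pd u 1 0 x y * pd u 0 1 x y ^ 2
  + Dgu 2 x y * (2 * pd u 0 1 x y * pd u 1 1 x y + pd u 1 0 x y * pd u 0 2 x y)
  + Dgu 1 x y * pd u 1 2 x y - pd s 1 1 x y.

Lemma pxx_rfun x y : px (px (rfun f g s u)) x y = rxx_expr x y.
Proof.
  unfold px at 1. rewrite (Derive_ext _ (fun t => rx_expr t y)) by (intros; apply px_rfun).
  apply is_derive_unique. unfold rx_expr, ux, uy. auto_derive; [ex_derive_all|].
  unfold rxx_expr, Dfu, Dgu, pd; cbv [px py Derive_n partial_derive]. ring.
Qed.

Lemma pxy_rfun x y : px (py (rfun f g s u)) x y = rxy_expr x y.
Proof.
  unfold px at 1. rewrite (Derive_ext _ (fun t => ry_expr t y)) by (intros; apply py_rfun).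
  apply is_derive_unique. unfold ry_expr, ux, uy. auto_derive; [ex_derive_all|].
  unfold rxy_expr, Dfu, Dgu, pd; cbv [px py Derive_n partial_derive]. ring.
Qed.

Lemma pyy_rfun x y : py (py (rfun f g s u)) x y = ryy_expr x y.
Proof.
  unfold py at 1. rewrite (Derive_ext _ (fun t => ry_expr x t)) by (intros; apply py_rfun).
  apply is_derive_unique. unfold ry_expr, ux, uy. auto_derive; [ex_derive_all|].
  assert (E1 := smooth2_schwarz u x y Hu).
  assert (E2 := smooth2_schwarz (py u) x y (smooth2_iterD u (false :: nil) Hu)).
  cbv [px py] in *. rewrite <- E1, <- E2.
  unfold ryy_expr, Dfu, Dgu, pd; cbv [px py Derive_n partial_derive]. ring.
Qed.

End RDerivatives.

Lemma fn_scal f g k n w : fn f g (vscal k n) w = k * fn f g n w.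
Proof. unfold fn, vscal; cbn [fst snd]; ring. Qed.

Lemma an_scal f g k n w : an f g (vscal k n) w = k * an f g n w.
Proof. unfold an, vscal; cbn [fst snd]; ring. Qed.

(** * Lattice geometry and the least-squares gradient *)

Section Scheme.
Variables a b c d : R.
Hypothesis Hdet : a * d - b * c <> 0.
Notation e1 := (a, b).
Notation e2 := (c, d).

Definition ox m := fst (ref_offset e1 e2 m).
Definition oy m := snd (ref_offset e1 e2 m).

Lemma dvec_fst h m : fst (dvec e1 e2 h m) = h * ox m.
Proof. reflexivity. Qed.
Lemma dvec_snd h m : snd (dvec e1 e2 h m) = h * oy m.
Proof. reflexivity. Qed.

Ltac offsets := unfold ox, oy, ref_offset; simpl Nat.modulo; cbn [fst snd vsub vopp].

Definition gram11 := sum6 (fun m => ox m * ox m).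
Definition gram12 := sum6 (fun m => ox m * oy m).
Definition gram22 := sum6 (fun m => oy m * oy m).
Definition gram_det := gram11 * gram22 - gram12 * gram12.

Lemma gram_det_eq : gram_det = 12 * (a * d - b * c) ^ 2.
Proof. unfold gram_det, gram11, gram12, gram22, sum6. offsets. ring. Qed.

Lemma gram_det_neq0 : gram_det <> 0.
Proof.
  rewrite gram_det_eq. apply Rmult_integral_contrapositive. split; [lra|]. now apply pow_nonzero.
Qed.

Definition lsq_wx v1 v2 := (gram22 * v1 - gram12 * v2) / gram_det.
Definition lsq_wy v1 v2 := (gram11 * v2 - gram12 * v1) / gram_det.
Definition lsq_dot (B1 B2 v1 v2 : R) := lsq_wx v1 v2 * B1 + lsq_wy v1 v2 * B2.

Definition moment (w : nat -> R) (F : R * R -> R) h q :=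
  sum6 (fun m => w m * (F (vadd q (dvec e1 e2 h m)) - F q)).

Lemma lsq_grad_dot h F q i : h <> 0 ->
  dot (lsq_grad e1 e2 h F q) (dvec e1 e2 h i)
  = lsq_dot (moment ox F h q) (moment oy F h q) (ox i) (oy i).
Proof.
  intros Hh. pose proof gram_det_neq0 as HG.
  unfold lsq_grad, lsq_dot, lsq_wx, lsq_wy, moment, dot. cbv zeta. cbn [fst snd].
  unfold gram_det, gram11, gram12, gram22, sum6 in *. rewrite !dvec_fst, !dvec_snd.
  field. split; auto.
  intro Hc. apply HG. apply (Rmult_eq_reg_l (h ^ 4)); [|now apply pow_nonzero].
  rewrite Rmult_0_r, <- Hc. ring.
Qed.

Ltac lattice_field :=
  rewrite ?gram_det_eq; unfold gram11, gram12, gram22, sum6; offsets; field; auto.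

Definition lsq_cubic F x y v1 v2 :=
  lsq_dot (sum6 (fun m => ox m * j3 (tjet F x y (ox m) (oy m))))
          (sum6 (fun m => oy m * j3 (tjet F x y (ox m) (oy m)))) v1 v2.

Lemma approx_moment w F x y v1 v2 : smooth2 F ->
  approx 4 (fun h => moment w (ev F) h (x + h * v1, y + h * v2))
    (jsum6 (fun m => jscal (w m) (jsub (tjet F x y (v1 + ox m) (v2 + oy m)) (tjet F x y v1 v2)))).
Proof.
  intros HF. apply approx_sum6. intros m.
  apply approx_scal, approx_sub; [|now apply approx_taylor2].
  eapply approx_ext; [|reflexivity|exact (approx_taylor2 F x y _ _ HF)].
  intros h _. unfold ev, vadd, dvec, vscal, ox, oy. cbn [fst snd]. f_equal; ring.
Qed.

(** The fit is exact on linear data and, the stencil being point symmetric, blind to quadratic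
    terms at the node itself: the error starts at [h^3]. *)
Lemma approx_lsq_node F x y v1 v2 : smooth2 F ->
  approx 4 (fun h => lsq_dot (moment ox (ev F) h (x, y)) (moment oy (ev F) h (x, y)) v1 v2)
    (mkJ 0 (j1 (tjet F x y v1 v2)) 0 (lsq_cubic F x y v1 v2)).
Proof.
  intros HF.
  pose proof (fun w => approx_moment w F x y 0 0 HF) as HM.
  eapply approx_ext; [|
    |exact (approx_add _ _ _ _ _ (approx_scal _ (lsq_wx v1 v2) _ _ (HM ox))
                                (approx_scal _ (lsq_wy v1 v2) _ _ (HM oy)))].
  - intros h _. unfold lsq_dot. do 2 f_equal; f_equal; f_equal; ring.
  - apply jet_eq; cbn; unfold lsq_cubic, lsq_dot, lsq_wx, lsq_wy, tjet; cbn; lattice_field.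
Qed.

Lemma approx_lsq_neighbour F x y v1 v2 : smooth2 F ->
  approx 4 (fun h => lsq_dot (moment ox (ev F) h (x + h * v1, y + h * v2))
                             (moment oy (ev F) h (x + h * v1, y + h * v2)) v1 v2)
    (mkJ 0 (j1 (tjet F x y v1 v2)) (2 * j2 (tjet F x y v1 v2))
         (3 * j3 (tjet F x y v1 v2) + lsq_cubic F x y v1 v2)).
Proof.
  intros HF.
  pose proof (fun w => approx_moment w F x y v1 v2 HF) as HM.
  eapply approx_ext; [reflexivity|
    |exact (approx_add _ _ _ _ _ (approx_scal _ (lsq_wx v1 v2) _ _ (HM ox))
                                (approx_scal _ (lsq_wy v1 v2) _ _ (HM oy)))].
  apply jet_eq; cbn; unfold lsq_cubic, lsq_dot, lsq_wx, lsq_wy, tjet; cbn; lattice_field.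
Qed.

Definition orient := if Rle_dec 0 (a * d - b * c) then 1 else -1.

Lemma orient_neq0 : orient <> 0.
Proof. unfold orient; destruct Rle_dec; lra. Qed.

Lemma Rabs_det : Rabs (a * d - b * c) = orient * (a * d - b * c).
Proof.
  unfold orient; destruct Rle_dec.
  - rewrite Rabs_right; lra.
  - rewrite Rabs_left; lra.
Qed.

Definition nraw1 i := nraw e1 e2 1 i.
Definition nref i := vscal orient (nraw1 i).

Lemma nraw_scale h i : nraw e1 e2 h i = vscal h (nraw1 i).
Proof.
  unfold nraw1, nraw. cbv zeta. unfold dvec, vscal, vadd, vsub, rot.
  destruct (ref_offset e1 e2 i), (ref_offset e1 e2 (i + 5)), (ref_offset e1 e2 (S i)).
  cbn [fst snd]. f_equal; field.
Qed.

Lemma nraw1_fst i : fst (nraw1 i) = (oy (S i) - oy (i + 5)) / 3.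
Proof.
  unfold nraw1, nraw, oy. cbv zeta. unfold dvec, vscal, vadd, vsub, rot.
  destruct (ref_offset e1 e2 i), (ref_offset e1 e2 (i + 5)), (ref_offset e1 e2 (S i)).
  cbn [fst snd]. field.
Qed.

Lemma nraw1_snd i : snd (nraw1 i) = - (ox (S i) - ox (i + 5)) / 3.
Proof.
  unfold nraw1, nraw, ox. cbv zeta. unfold dvec, vscal, vadd, vsub, rot.
  destruct (ref_offset e1 e2 i), (ref_offset e1 e2 (i + 5)), (ref_offset e1 e2 (S i)).
  cbn [fst snd]. field.
Qed.

Lemma dot_nraw1 i : (i < 6)%nat ->
  fst (nraw1 i) * ox i + snd (nraw1 i) * oy i = 2 / 3 * (a * d - b * c).
Proof.
  intros Hi. rewrite nraw1_fst, nraw1_snd.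
  do 6 (destruct i as [|i]; [cbn [Nat.add]; offsets; field|]). lia.
Qed.

Lemma nvec_scale h i : 0 < h -> (i < 6)%nat -> nvec e1 e2 h i = vscal h (nref i).
Proof.
  intros Hh Hi. unfold nvec. rewrite nraw_scale.
  assert (Hdot : dot (vscal h (nraw1 i)) (dvec e1 e2 h i) = h * h * (2 / 3 * (a * d - b * c))).
  { rewrite <- (dot_nraw1 i Hi). unfold dot, dvec, vscal, ox, oy. cbn [fst snd]. ring. }
  rewrite Hdot. unfold nref, orient.
  destruct (Rle_dec 0 (a * d - b * c)), (Rle_dec 0 (h * h * (2 / 3 * (a * d - b * c)))).
  - unfold vscal; destruct (nraw1 i); cbn [fst snd]; f_equal; ring.
  - exfalso. nra.
  - exfalso. assert (0 < h * h) by nra. nra.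
  - unfold vscal, vopp; destruct (nraw1 i); cbn [fst snd]; f_equal; ring.
Qed.

Lemma dot_nref i : (i < 6)%nat ->
  fst (nref i) * ox i + snd (nref i) * oy i = orient * (2 / 3 * (a * d - b * c)).
Proof. intros Hi. rewrite <- (dot_nraw1 i Hi). unfold nref, vscal; cbn [fst snd]; ring. Qed.

Lemma vnorm_nref_pos h i : 0 < h -> (i < 6)%nat -> 0 < vnorm (vscal h (nref i)).
Proof.
  intros Hh Hi. unfold vnorm. apply sqrt_lt_R0. unfold dot, vscal; cbn [fst snd].
  pose proof (dot_nref i Hi) as H. pose proof orient_neq0.
  destruct (nref i) as [n1 n2]; cbn [fst snd] in *.
  assert (0 < h * h) by nra.
  destruct (Req_dec n1 0) as [E1|E1]; [destruct (Req_dec n2 0) as [E2|E2]|].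
  - subst. exfalso. assert (Hz : orient * (2 / 3 * (a * d - b * c)) = 0) by lra.
    apply Rmult_integral in Hz. destruct Hz; lra.
  - assert (0 < n2 * n2) by now apply Rsqr_pos_lt. nra.
  - assert (0 < n1 * n1) by now apply Rsqr_pos_lt. nra.
Qed.

Lemma Vcell_scale h : 0 < h -> Vcell e1 e2 h = h ^ 2 * (orient * (a * d - b * c)).
Proof.
  intros Hh. rewrite <- Rabs_det.
  assert (Hdet2 : forall i, (i < 6)%nat ->
    det2 (dvec e1 e2 h i) (dvec e1 e2 h (S i)) = h ^ 2 * (a * d - b * c)).
  { intros i Hi. unfold det2. rewrite !dvec_fst, !dvec_snd.
    do 6 (destruct i as [|i]; [offsets; ring|]). lia. }
  unfold Vcell, sum6. rewrite !Hdet2 by lia.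
  rewrite Rabs_mult, (Rabs_right (h ^ 2)) by (apply Rle_ge, pow_le; lra). field.
Qed.

Lemma nref_opp i : (i < 3)%nat -> nref (i + 3) = vopp (nref i).
Proof.
  intros Hi. unfold nref, vscal, vopp. rewrite !nraw1_fst, !nraw1_snd.
  do 3 (destruct i as [|i]; [cbn [Nat.add]; offsets; f_equal; field|]). lia.
Qed.

(** * The residual at scale [h] *)

Variables (f g : R -> R) (s u : R -> R -> R) (ustar : R * R -> R -> R -> R) (x y : R).
Hypotheses (Hf : smooth1 f) (Hg : smooth1 g) (Hs : smooth2 s) (Hu : smooth2 u).
Hypothesis Hustar : forall n l r, Rmin l r <= ustar n l r <= Rmax l r.
Notation p := (x, y).

Definition uLh i h := uLval e1 e2 h u (1/2) p i.
Definition uRh i h := uRval e1 e2 h u (1/2) p i.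

Definition flux_central h i := / 2 * (fn f g (nref i) (uLh i h) + fn f g (nref i) (uRh i h)).
Definition wave_speed h i := Rabs (an f g (nref i) (ustar (nhat e1 e2 h i) (uLh i h) (uRh i h))).
Definition dissipation h i := / 2 * wave_speed h i * (uRh i h - uLh i h).

Lemma phi_Aface h i : 0 < h -> (i < 6)%nat ->
  phi e1 e2 h f g u ustar (1/2) p i * Aface e1 e2 h i = h * (flux_central h i - dissipation h i).
Proof.
  intros Hh Hi. unfold phi, flux_central, dissipation, wave_speed, uLh, uRh. cbv zeta.
  unfold nhat, Aface. rewrite !(nvec_scale h i Hh Hi).
  pose proof (vnorm_nref_pos h i Hh Hi) as HA. set (A := vnorm (vscal h (nref i))) in *.
  rewrite !fn_scal, !an_scal, !Rabs_mult.
  rewrite (Rabs_right (/ A)) by (apply Rle_ge, Rlt_le, Rinv_0_lt_compat; auto).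
  rewrite (Rabs_right h) by lra. field. lra.
Qed.

Definition Vjk_ref i := / 4 * (ox i * fst (nref i) + oy i * snd (nref i)).

Lemma Vjk_scale h i : 0 < h -> (i < 6)%nat -> Vjk e1 e2 h i = h ^ 2 * Vjk_ref i.
Proof.
  intros Hh Hi. unfold Vjk, Vjk_ref. rewrite (nvec_scale h i Hh Hi).
  unfold dot, vscal. rewrite dvec_fst, dvec_snd. cbn [fst snd]. ring.
Qed.

Definition Vref := orient * (a * d - b * c).

Definition Qref := sum6 (fun i =>
  fst (nref i) * ox i ^ 3 * ev (px (px (rfun f g s u))) p
  + snd (nref i) * oy i ^ 3 * ev (py (py (rfun f g s u))) p
  + 3 * fst (nref i) * ox i ^ 2 * oy i * ev (px (py (rfun f g s u))) p).

Lemma Qterm_scale h : 0 < h -> Qterm e1 e2 h f g s u p = h ^ 4 * Qref.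
Proof.
  intros Hh. unfold Qterm, Qref, sum6. cbv zeta.
  rewrite !(nvec_scale h) by (auto; lia). unfold vscal. rewrite !dvec_fst, !dvec_snd.
  cbn [fst snd]. ring.
Qed.

Lemma Res_scale h : 0 < h ->
  Res e1 e2 h f g s u ustar (1/2) (1/4) p =
  (sum6 (fun i => flux_central h i) / h - sum6 (fun i => dissipation h i) / h
   - sum6 (fun i => Vjk_ref i * psi e1 e2 h s (1/4) p i)) / Vref.
Proof.
  intros Hh. unfold Res, stilde, Vref. rewrite Vcell_scale by auto. unfold sum6.
  rewrite !(phi_Aface h) by (auto; lia). rewrite !(Vjk_scale h) by (auto; lia).
  pose proof orient_neq0. field. repeat split; auto; lra.
Qed.

Notation tj F i := (tjet F x y (ox i) (oy i)).
Notation lc F i := (lsq_cubic F x y (ox i) (oy i)).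

Definition jet_uL i :=
  mkJ (u x y) (/ 2 * j1 (tj u i)) (/ 4 * j2 (tj u i)) (/ 4 * j3 (tj u i) + / 4 * lc u i).
Definition jet_uR i :=
  mkJ (u x y) (/ 2 * j1 (tj u i)) (/ 4 * j2 (tj u i)) (- / 4 * lc u i).
Definition jet_psi i :=
  mkJ (s x y) (/ 2 * j1 (tj s i)) (/ 8 * j2 (tj s i)) (/ 8 * j3 (tj s i) + 3 / 8 * lc s i).

Lemma approx_uL i : approx 4 (uLh i) (jet_uL i).
Proof.
  eapply approx_ext; [| |exact (approx_add _ _ _ _ _ (approx_const 4 (u x y)) (approx_add _ _ _ _ _
     (approx_scal _ (/ 4) _ _ (approx_sub _ _ _ _ _ (approx_taylor2 u x y (ox i) (oy i) Hu)
                                                    (approx_const 4 (u x y))))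
     (approx_scal _ (/ 4) _ _ (approx_lsq_node u x y (ox i) (oy i) Hu))))].
  - intros h Hh. unfold uLh, uLval. rewrite lsq_grad_dot by lra.
    unfold ev, vadd, dvec, vscal, ox, oy. cbn [fst snd]. field.
  - apply jet_eq; cbn; field.
Qed.

Lemma approx_uR i : approx 4 (uRh i) (jet_uR i).
Proof.
  assert (Hk := approx_taylor2 u x y (ox i) (oy i) Hu).
  eapply approx_ext; [| |exact (approx_sub _ _ _ _ _ (approx_sub _ _ _ _ _ Hk
     (approx_scal _ (/ 4) _ _ (approx_sub _ _ _ _ _ Hk (approx_const 4 (u x y)))))
     (approx_scal _ (/ 4) _ _ (approx_lsq_neighbour u x y (ox i) (oy i) Hu)))].
  - intros h Hh. unfold uRh, uRval. rewrite lsq_grad_dot by lra.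
    unfold ev, vadd, dvec, vscal, ox, oy. cbn [fst snd]. field.
  - apply jet_eq; cbn; field.
Qed.

Lemma approx_psi i : approx 4 (fun h => psi e1 e2 h s (1/4) p i) (jet_psi i).
Proof.
  eapply approx_ext; [| |exact (approx_add _ _ _ _ _
     (approx_scal _ (1/4) _ _ (approx_scal _ (/ 2) _ _
        (approx_add _ _ _ _ _ (approx_const 4 (s x y)) (approx_taylor2 s x y (ox i) (oy i) Hs))))
     (approx_scal _ (1 - 1/4) _ _ (approx_add _ _ _ _ _ (approx_const 4 (s x y))
        (approx_scal _ (/ 2) _ _ (approx_lsq_node s x y (ox i) (oy i) Hs)))))].
  - intros h Hh. unfold psi. rewrite lsq_grad_dot by lra.
    unfold ev, vadd, dvec, vscal, ox, oy. cbn [fst snd]. field.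
  - apply jet_eq; cbn; field.
Qed.

Definition jet_flux i :=
  jscal (/ 2) (jadd (jadd (jscal (fst (nref i)) (jcomp f (jet_uL i)))
                          (jscal (snd (nref i)) (jcomp g (jet_uL i))))
                    (jadd (jscal (fst (nref i)) (jcomp f (jet_uR i)))
                          (jscal (snd (nref i)) (jcomp g (jet_uR i))))).

Lemma approx_flux_central i : approx 4 (fun h => flux_central h i) (jet_flux i).
Proof.
  pose proof (approx_uL i) as HL. pose proof (approx_uR i) as HR.
  eapply approx_ext; [| reflexivity |exact (approx_scal _ (/ 2) _ _ (approx_add _ _ _ _ _
     (approx_add _ _ _ _ _ (approx_scal _ (fst (nref i)) _ _ (approx_comp f _ _ Hf HL))
                           (approx_scal _ (snd (nref i)) _ _ (approx_comp g _ _ Hg HL)))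
     (approx_add _ _ _ _ _ (approx_scal _ (fst (nref i)) _ _ (approx_comp f _ _ Hf HR))
                           (approx_scal _ (snd (nref i)) _ _ (approx_comp g _ _ Hg HR)))))].
  intros h _. unfold flux_central, fn. ring.
Qed.

(** * The upwind dissipation *)

Lemma an_lipschitz_near n v : exists K, 0 <= K /\
  forall w, Rabs (w - v) <= 1 -> Rabs (an f g n w - an f g n v) <= K * Rabs (w - v).
Proof.
  destruct (Derive_lipschitz_near f v Hf) as [Lf [HLf Hf1]].
  destruct (Derive_lipschitz_near g v Hg) as [Lg [HLg Hg1]].
  pose proof (Rabs_pos (fst n)); pose proof (Rabs_pos (snd n)).
  exists (Rabs (fst n) * Lf + Rabs (snd n) * Lg). split; [nra|].
  intros w Hw. unfold an.
  replace (Derive f w * fst n + Derive g w * snd n - (Derive f v * fst n + Derive g v * snd n))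
    with (fst n * (Derive f w - Derive f v) + snd n * (Derive g w - Derive g v)) by ring.
  eapply Rle_trans; [apply Rabs_triang|]. rewrite !Rabs_mult.
  specialize (Hf1 w Hw). specialize (Hg1 w Hw).
  apply Rle_trans with (Rabs (fst n) * (Lf * Rabs (w - v)) + Rabs (snd n) * (Lg * Rabs (w - v))).
  - apply Rplus_le_compat; apply Rmult_le_compat_l; auto.
  - right; ring.
Qed.

Lemma Oh_state_near_node i : Oh 1 (fun h => Rabs (uLh i h - u x y) + Rabs (uRh i h - u x y)).
Proof.
  assert (Hl : Oh 1 (fun h => uLh i h - u x y)).
  { apply (approx_O1 4 _ (jsub (jet_uL i) (jconst (u x y)))); [lia|cbn; ring|].
    exact (approx_sub _ _ _ _ _ (approx_uL i) (approx_const 4 (u x y))). }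
  assert (Hr : Oh 1 (fun h => uRh i h - u x y)).
  { apply (approx_O1 4 _ (jsub (jet_uR i) (jconst (u x y)))); [lia|cbn; ring|].
    exact (approx_sub _ _ _ _ _ (approx_uR i) (approx_const 4 (u x y))). }
  exact (Oh_add _ _ _ (Oh_abs _ _ Hl) (Oh_abs _ _ Hr)).
Qed.

Lemma Oh_wave_speed i : Oh 1 (fun h => wave_speed h i - Rabs (an f g (nref i) (u x y))).
Proof.
  pose proof (Oh_state_near_node i) as HG.
  destruct (an_lipschitz_near (nref i) (u x y)) as [K [HK HKl]].
  destruct (Oh1_eventually_le1 _ HG) as [h1 [Hh1 HGb]].
  apply (Oh_dominated 1 _ _ K HG HK). exists h1. split; auto. intros h Hh. unfold wave_speed.
  set (w := ustar (nhat e1 e2 h i) (uLh i h) (uRh i h)).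
  assert (Hw : Rabs (w - u x y) <= Rabs (uLh i h - u x y) + Rabs (uRh i h - u x y))
    by apply between_dist, Hustar.
  specialize (HGb h Hh). pose proof (Rabs_pos (w - u x y)).
  pose proof (Rle_abs (Rabs (uLh i h - u x y) + Rabs (uRh i h - u x y))).
  eapply Rle_trans; [apply Rabs_triang_inv2|].
  eapply Rle_trans; [apply HKl; lra|].
  rewrite (Rabs_right (_ + _)) by (apply Rle_ge, Rplus_le_le_0_compat; apply Rabs_pos).
  apply Rmult_le_compat_l; auto.
Qed.

Definition jump i := j3 (jet_uR i) - j3 (jet_uL i).

Lemma approx_jump i : Oh 4 (fun h => uRh i h - uLh i h - jump i * h ^ 3).
Proof.
  eapply Oh_ext; [|exact (approx_sub _ _ _ _ _ (approx_uR i) (approx_uL i))].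
  intros h _. unfold jev, jump, jet_uR, jet_uL. cbn. ring.
Qed.

Lemma Oh_dissipation_edge i :
  Oh 4 (fun h => dissipation h i - / 2 * Rabs (an f g (nref i) (u x y)) * (jump i * h ^ 3)).
Proof.
  assert (H3 : Oh 3 (fun h => uRh i h - uLh i h)).
  { eapply Oh_ext; [|exact (Oh_add _ _ _ (Oh_weaken 4 3 _ (le_S _ _ (le_n 3)) (approx_jump i))
                                         (Oh_monomial 3 3 (jump i) (le_n 3)))].
    intros h _. cbv beta. ring. }
  eapply Oh_ext; [|exact (Oh_add _ _ _
    (Oh_scal _ (/ 2) _ (Oh_mult 1 3 _ _ (Oh_wave_speed i) H3))
    (Oh_scal _ (/ 2 * Rabs (an f g (nref i) (u x y))) _ (approx_jump i)))].
  intros h _. unfold dissipation. cbv beta. ring.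
Qed.

Lemma lsq_cubic_opp F v1 v2 : lsq_cubic F x y (- v1) (- v2) = - lsq_cubic F x y v1 v2.
Proof. unfold lsq_cubic, lsq_dot, lsq_wx, lsq_wy. unfold Rdiv. ring. Qed.

Lemma jump_opp i : (i < 3)%nat -> jump (i + 3) = - jump i.
Proof.
  intros Hi. unfold jump, jet_uR, jet_uL, tjet. cbn [j3].
  assert (Ho : ox (i + 3) = - ox i /\ oy (i + 3) = - oy i).
  { do 3 (destruct i as [|i]; [cbn [Nat.add]; offsets; split; ring|]). lia. }
  destruct Ho as [-> ->]. rewrite !lsq_cubic_opp. field.
Qed.

(** Opposite edges carry opposite normals and opposite jumps, so the leading dissipation cancels. *)
Lemma dissipation_leading_sum h :
  sum6 (fun i => / 2 * Rabs (an f g (nref i) (u x y)) * (jump i * h ^ 3)) = 0.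
Proof.
  assert (Han : forall i, (i < 3)%nat -> an f g (nref (i + 3)) (u x y) = - an f g (nref i) (u x y)).
  { intros i Hi. rewrite (nref_opp i Hi). unfold an, vopp. cbn [fst snd]. ring. }
  pose proof (Han 0%nat) as A0; pose proof (Han 1%nat) as A1; pose proof (Han 2%nat) as A2.
  pose proof (jump_opp 0) as J0; pose proof (jump_opp 1) as J1; pose proof (jump_opp 2) as J2.
  cbn [Nat.add] in *. unfold sum6.
  rewrite A0, A1, A2, J0, J1, J2, !Rabs_Ropp by lia. ring.
Qed.

Lemma Oh_dissipation : Oh 4 (fun h => sum6 (fun i => dissipation h i)).
Proof.
  eapply Oh_ext; [|exact (Oh_sum6 4 _ Oh_dissipation_edge)].
  intros h _. cbv beta.
  rewrite <- (Rminus_0_r (sum6 (fun i => dissipation h i))), <- (dissipation_leading_sum h).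
  unfold sum6. ring.
Qed.

(** * Expansion of the residual *)

Lemma nref_closed : sum6 (fun i => fst (nref i)) = 0 /\ sum6 (fun i => snd (nref i)) = 0.
Proof.
  unfold sum6, nref, vscal. cbn [fst snd]. rewrite !nraw1_fst, !nraw1_snd.
  cbn [Nat.add]. offsets. split; field.
Qed.

Lemma jet_flux_sum_j0 : j0 (jsum6 jet_flux) = 0.
Proof.
  destruct nref_closed as [Hx Hy].
  transitivity (f (u x y) * sum6 (fun i => fst (nref i))
                + g (u x y) * sum6 (fun i => snd (nref i))).
  - cbn [j0 jsum6 jscal jadd jmul jcomp jconst jet_flux jet_uL jet_uR]. unfold sum6. field.
  - rewrite Hx, Hy. ring.
Qed.

Definition jet_residual :=
  jsub (jsub (jsub (jscal (/ Vref) (jshift (jsum6 jet_flux)))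
                   (jscal (/ Vref) (jsum6 (fun i => jscal (Vjk_ref i) (jet_psi i)))))
             (jconst (ev (rfun f g s u) p)))
       (mkJ 0 0 (Qref / (48 * Vref)) 0).

Lemma approx_residual :
  approx 3 (fun h => (sum6 (fun i => flux_central h i) / h
                      - sum6 (fun i => Vjk_ref i * psi e1 e2 h s (1/4) p i)) / Vref
                     - ev (rfun f g s u) p - h ^ 2 * (Qref / (48 * Vref)))
    jet_residual.
Proof.
  assert (HF := approx_div_h 3 _ _ jet_flux_sum_j0 (approx_sum6 4 _ _ approx_flux_central)).
  assert (HP := approx_sum6 4 _ _ (fun i => approx_scal 4 (Vjk_ref i) _ _ (approx_psi i))).
  eapply approx_ext; [|reflexivity|exact (approx_sub _ _ _ _ _ (approx_sub _ _ _ _ _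
    (approx_sub _ _ _ _ _ (approx_scal _ (/ Vref) _ _ HF)
                          (approx_scal _ (/ Vref) _ _ (approx_weaken 4 3 _ _ (Nat.le_succ_diag_r 3) HP)))
    (approx_const 3 _)) (approx_monomial2 3 _))].
  intros h _. cbv beta. unfold Rdiv. ring.
Qed.

Ltac residual_jet_simpl :=
  cbn [j0 j1 j2 j3 jadd jscal jsub jmul jconst jshift jsum6 jcomp jet_residual jet_flux
       jet_uL jet_uR jet_psi tjet ev fst snd];
  unfold Qref, Vref, Vjk_ref, sum6;
  cbn [j0 j1 j2 j3 jadd jscal jsub jmul jconst jshift jsum6 jcomp jet_flux
       jet_uL jet_uR jet_psi tjet fst snd];
  unfold ev; cbn [fst snd];
  rewrite ?(rfun_pd f g s u Hf Hg Hu), ?(pxx_rfun f g s u Hf Hg Hs Hu),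
    ?(pxy_rfun f g s u Hf Hg Hs Hu), ?(pyy_rfun f g s u Hf Hg Hs Hu);
  unfold rxx_expr, rxy_expr, ryy_expr, Dfu, Dgu, nref, vscal; cbn [fst snd];
  rewrite ?nraw1_fst, ?nraw1_snd; cbn [Nat.add]; offsets;
  pose proof orient_neq0; field; split; auto.

Lemma residual_jet_j0 : j0 jet_residual = 0.
Proof. residual_jet_simpl. Qed.

Lemma residual_jet_j1 : j1 jet_residual = 0.
Proof. residual_jet_simpl. Qed.

Lemma residual_jet_j2 : j2 jet_residual = 0.
Proof. residual_jet_simpl. Qed.

Lemma residual_expansion :
  Oh 3 (fun h => Res e1 e2 h f g s u ustar (1/2) (1/4) p - ev (rfun f g s u) p
                 - / (48 * Vcell e1 e2 h) * Qterm e1 e2 h f g s u p).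
Proof.
  assert (HT := approx_Oh3 _ _ residual_jet_j0 residual_jet_j1 residual_jet_j2 approx_residual).
  assert (HD := Oh_scal 3 (/ Vref) _ (Oh_div_h 3 _ Oh_dissipation)).
  eapply Oh_ext; [|exact (Oh_sub _ _ _ HT HD)].
  intros h Hh. cbv beta. rewrite Res_scale, Vcell_scale, Qterm_scale by auto.
  unfold Vref. pose proof orient_neq0. field. repeat split; auto; lra.
Qed.

End Scheme.

Lemma partials_of_zero F : (forall x y, F x y = 0) ->
  (forall x y, px F x y = 0) /\ (forall x y, py F x y = 0).
Proof.
  intros HF. split; intros x y; [unfold px|unfold py];
    rewrite (Derive_ext _ (fun _ => 0)) by (intros; apply HF); apply Derive_const.
Qed.

Lemma Qterm_exact_solution e1 e2 h f g s u p : (forall x y, rfun f g s u x y = 0) ->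
  Qterm e1 e2 h f g s u p = 0.
Proof.
  intros Hr. destruct (partials_of_zero _ Hr) as [Hx Hy].
  destruct (partials_of_zero _ Hx) as [Hxx _], (partials_of_zero _ Hy) as [Hyx Hyy].
  unfold Qterm, sum6, ev. rewrite !Hxx, !Hyx, !Hyy. ring.
Qed.

Theorem mainTheorem3 :
  forall (f g : R -> R) (s u : R -> R -> R) (e1 e2 p : R * R)
         (ustar : R * R -> R -> R -> R),
    smooth1 f -> smooth1 g -> smooth2 s -> smooth2 u ->
    det2 e1 e2 <> 0 ->
    (forall n a b, Rmin a b <= ustar n a b <= Rmax a b) ->
    (* expansion of the residual for any smooth u *)
    (exists C h0 : R, 0 < h0 /\
       forall h : R, 0 < h < h0 ->
         Rabs (Res e1 e2 h f g s u ustar (1/2) (1/4) p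
               - ev (rfun f g s u) p
               - / (48 * Vcell e1 e2 h) * Qterm e1 e2 h f g s u p)
         <= C * h ^ 3) /\
    (* truncation error for an exact solution *)
    ((forall x y, rfun f g s u x y = 0) ->
     exists C h0 : R, 0 < h0 /\
       forall h : R, 0 < h < h0 ->
         Rabs (Res e1 e2 h f g s u ustar (1/2) (1/4) p) <= C * h ^ 3).
Proof.
  intros f g s u [a b] [c d] [x y] ustar Hf Hg Hs Hu Hdet Hustar.
  destruct (residual_expansion a b c d Hdet f g s u ustar x y Hf Hg Hs Hu Hustar)
    as [C [h0 [_ [Hh0 Hbound]]]].
  split; [exists C, h0; auto|].
  intros Hr. exists C, h0. split; auto. intros h Hh.
  specialize (Hbound h Hh).
  assert (Hr0 : ev (rfun f g s u) (x, y) = 0) by apply Hr.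
  rewrite Qterm_exact_solution, Hr0, Rmult_0_r, !Rminus_0_r in Hbound by exact Hr.
  exact Hbound.
Qed.
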